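(* Let $y=Fx+u\in\mathcal Y_N$. For any $v\in\mathcal Y_N$, $$\int_{-N}^NT^{\rm qnll}(y;x)\nabla v\,dx\le\tfrac12M^{(3,0)}\|\nabla u\|^2_{L^4(\Omega_{\rm l})}\|\nabla v\|_{L^2(\Omega_{\rm l})},$$ where $T^{\rm qnll}(y;x)=W_{\rm L}'(\nabla y(x))-W'(\nabla y(x))$ for $x\in\Omega_{\rm l}$ and $T^{\rm qnll}(y;x)=0$ otherwise.
   Context: One-dimensional lattice $\mathbb Z$, $F>0$. For a lattice function $w$, $\nabla w(x)=w(\xi)-w(\xi-1)$ for $x\in(\xi-1,\xi)$. $\mathcal Y_N=\{Fx+u: u:\mathbb Z\to\mathbb R,\ u(\xi)=0$ for $|\xi|\ge N\}$. $\mathcal R=\{\pm1,\pm2\}$, $V\in C^3(\mathbb R^{\mathcal R})$; $m(\boldsymbol\rho)=\prod_i|\rho_i|\sup_g|\partial_{\rho_1}\cdots\partial_{\rho_j}V(g)|$ for $\boldsymbol\rho\in\mathcal R^j$, $M^{(j,s)}=\sum_{\boldsymbol\rho\in\mathcal R^j}m(\boldsymbol\rho)|\boldsymbol\rho|_\infty^s$. $W(G)=V((G\rho)_{\rho\in\mathcal R})$; $W_{\rm L}(G)=W(F)+W'(F)(G-F)+\frac12W''(F)(G-F)^2$. $\Omega_{\rm l}=[-N,-L]\cup[L,N]$ for an integer $L<N$. $T^{\rm qnll}$ is the stress difference between the QNLL model (using $W_{\rm L}$ on $\Omega_{\rm l}$) and the QNL model (using $W$ there); they agree off $\Omega_{\rm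 l}$. *)

From HB Require Import structures.
From mathcomp Require Import all_boot all_order all_algebra.
From mathcomp Require Import all_classical all_reals all_analysis.
Set Implicit Arguments. Unset Strict Implicit. Unset Printing Implicit Defensive.
Import Order.TTheory GRing.Theory Num.Theory.
Import numFieldNormedType.Exports.
Local Open Scope classical_set_scope.
Local Open Scope ring_scope.

Section QNLL.
Variable R : realType.

(* Interaction range R = {-2,-1,1,2}, indexed by 'I_4. *)
Definition rho (i : 'I_4) : R := nth 0 [:: -2; -1; 1; 2] i.

Definition evec (i : 'I_4) : 'rV[R]_4 := delta_mx 0 i.

Definition pd (i : 'I_4) (f : 'rV[R]_4 -> R) : 'rV[R]_4 -> R := 'D_(evec i) f.

Definition C3 (V : 'rV[R]_4 -> R) : Prop :=
  continuous V /\
  (forall i g, derivable V g (evec i)) /\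
  (forall i, continuous (pd i V)) /\
  (forall i j g, derivable (pd i V) g (evec j)) /\
  (forall i j, continuous (pd j (pd i V))) /\
  (forall i j k g, derivable (pd j (pd i V)) g (evec k)) /\
  (forall i j k, continuous (pd k (pd j (pd i V)))).

Definition bounded_third (V : 'rV[R]_4 -> R) : Prop :=
  exists M : R, forall i j k g, `|pd i (pd j (pd k V)) g| <= M.

Definition m3 (V : 'rV[R]_4 -> R) (i j k : 'I_4) : R :=
  `|rho i * rho j * rho k| *
    sup (range (fun g => `|pd i (pd j (pd k V)) g|)).

Definition M30 (V : 'rV[R]_4 -> R) : R :=
  \sum_(i < 4) \sum_(j < 4) \sum_(k < 4) m3 V i j k.

Definition W (V : 'rV[R]_4 -> R) (G : R) : R := V (\row_i (G * rho i)).

Definition WL (V : 'rV[R]_4 -> R) (F G : R) : R :=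
  W V F + derive1 (W V) F * (G - F) + 2^-1 * derive1 (derive1 (W V)) F * (G - F) ^+ 2.

(* nabla w on the cell (xi-1, xi) *)
Definition nabla (w : int -> R) (xi : int) : R := w xi - w (xi - 1).

(* the cell (xi-1, xi) lies in Omega_l = [-N,-L] u [L,N] *)
Definition in_Omega_l (L : int) (N : nat) (xi : int) : bool :=
  ((L + 1 <= xi) && (xi <= N%:Z)) || ((- N%:Z + 1 <= xi) && (xi <= - L)).

(* integral over [-N,N] of a function that is constant (= f xi) on each
   cell (xi-1, xi), xi = -N+1, ..., N *)
Definition cell_integral (N : nat) (f : int -> R) : R :=
  \sum_(i < (2 * N)%N) f (i%:Z - N%:Z + 1).

Definition Lp_Omega_l (p : R) (L : int) (N : nat) (f : int -> R) : R :=
  (cell_integral N (fun xi => if in_Omega_l L N xi then `|f xi| `^ p else 0))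
    `^ (p^-1).

Definition Tqnll (V : 'rV[R]_4 -> R) (F : R) (L : int) (N : nat)
  (y : int -> R) (xi : int) : R :=
  if in_Omega_l L N xi
  then derive1 (WL V F) (nabla y xi) - derive1 (W V) (nabla y xi)
  else 0.

Definition in_YN (F : R) (N : nat) (y : int -> R) : Prop :=
  exists u : int -> R, (forall xi : int, N%:Z <= `|xi| -> u xi = 0) /\
                       (forall xi : int, y xi = F * xi%:~R + u xi).

End QNLL.

(* On a cell of Omega_l the stress difference is W'(F) + W''(F) (g - F) - W'(g) with
   g = nabla y = F + nabla u: the remainder of the first-order Taylor expansion of W' at F,
   hence at most (1/2) sup |W'''| (nabla u)^2.  Since W(G) = V(G rho), two applications of the
   chain rule write W''' as a rho-weighted sum of third partial derivatives of V, so
   sup |W'''| <= M^(3,0).  Summing over the cells and applying Cauchy-Schwarz to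
   sum (nabla u)^2 |nabla v| gives the L^4-L^2 bound.  The chain rule along G |-> G rho needs
   the directional derivative of a function on R^4 to be the rho-combination of its partial
   derivatives, which holds because these are continuous. *)

From HB Require Import structures.
From mathcomp Require Import all_boot all_order all_algebra.
From mathcomp Require Import all_classical all_reals all_analysis.
From mathcomp Require Import ring lra.
Import Order.TTheory GRing.Theory Num.Theory.
Import numFieldNormedType.Exports.
Local Open Scope classical_set_scope.
Local Open Scope ring_scope.

Section RealFunctions.
Context {R : realType}.
Implicit Types f df g dg : R -> R.

Lemma is_derive_within_continuous {f df} :
  (forall t : R, is_derive t 1 f (df t)) ->
  forall a b : R, {within `[a, b], continuous f}.
Proof. by move=> fdf a b; apply: derivable_within_continuous => t _; case: (fdf t). Qed.

Lemma MVT_between {g dg} x y : (forall t : R, is_derive t 1 g (dg t)) ->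
  exists2 c, `|c - x| <= `|y - x| & g y - g x = dg c * (y - x).
Proof.
move=> gdg; have cg := is_derive_within_continuous gdg.
have [xy|yx] := leP x y.
  have [c] := MVT_segment xy (fun t _ => gdg t) (cg x y).
  rewrite in_itv /= => /andP[xc cy] ->; exists c => //.
  by rewrite !ger0_norm ?subr_ge0 //; lra.
have [c] := MVT_segment (ltW yx) (fun t _ => gdg t) (cg y x).
rewrite in_itv /= => /andP[yc cx] E; exists c; last by rewrite -opprB E -mulrN opprB.
by rewrite !ler0_norm ?subr_le0 ?(ltW yx) //; lra.
Qed.

Lemma cauchy_MVT_between {f df g dg} a b : a != b ->
  (forall t : R, is_derive t 1 f (df t)) -> (forall t : R, is_derive t 1 g (dg t)) ->
  (forall t, 0 < `|t - a| < `|b - a| -> dg t != 0) ->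
  exists2 c, 0 < `|c - a| < `|b - a| & (f b - f a) / (g b - g a) = df c / dg c.
Proof.
move=> ab fdf gdg dg0.
have cf := is_derive_within_continuous fdf.
have cg := is_derive_within_continuous gdg.
have [lt_ab|lt_ba|/eqP] := ltgtP a b; last by rewrite (negPf ab).
  have between t : t \in `]a, b[ -> 0 < `|t - a| < `|b - a|.
    by rewrite in_itv /= => /andP[lt_at lt_tb]; rewrite !gtr0_norm ?subr_gt0 //; lra.
  have [c /between cab E] := cauchy_MVT lt_ab (cf a b) (cg a b) (fun t _ => fdf t)
    (fun t _ => gdg t) (fun t tab => dg0 t (between t tab)).
  by exists c.
have between t : t \in `]b, a[ -> 0 < `|t - a| < `|b - a|.
  by rewrite in_itv /= => /andP[lt_bt lt_ta]; rewrite !ltr0_norm ?subr_lt0 //; lra.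
have [c /between cab E] := cauchy_MVT lt_ba (cf b a) (cg b a) (fun t _ => fdf t)
  (fun t _ => gdg t) (fun t tab => dg0 t (between t tab)).
by exists c => //; rewrite E -divrNN !opprB.
Qed.

Lemma taylor2_bound f df ddf M a b :
  (forall t : R, is_derive t 1 f (df t)) -> (forall t : R, is_derive t 1 df (ddf t)) ->
  (forall t, `|ddf t| <= M) ->
  `|f b - f a - df a * (b - a)| <= 2^-1 * M * (b - a) ^+ 2.
Proof.
(* Cauchy's mean value theorem for h t = f t - df a * t and (t - a)^2 turns the remainder into
   (df c - df a) / (2 (c - a)) times (b - a)^2, and the mean value theorem bounds the quotient. *)
move=> fdf dfddf ddfM.
have [<-|ab] := eqVneq a b; first by rewrite !subrr mulr0 subr0 normr0 expr0n mulr0.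
pose h t := f t - df a * t.
have hdh (t : R) : is_derive t 1 h (df t - df a).
  apply: is_derive_eq (is_deriveB (fdf t) (is_deriveZ (df a) (is_derive_id t 1))) _.
  by rewrite [_ *: 1]mulr1.
pose g t := (t - a) ^+ 2.
have gdg (t : R) : is_derive t 1 g (2 * (t - a)).
  apply: is_derive_eq (is_deriveX 2 (is_derive_shift t 1 (- a))) _.
  by rewrite expr1 [_ *: 1]mulr1.
have [c /andP[ca _] E] : exists2 c, 0 < `|c - a| < `|b - a| &
    (h b - h a) / (g b - g a) = (df c - df a) / (2 * (c - a)).
  apply: cauchy_MVT_between hdh gdg _ => // t /andP[ta _].
  by rewrite mulf_neq0 ?pnatr_eq0 // -normr_gt0.
have gba : g b - g a = (b - a) ^+ 2 by rewrite /g subrr expr0n subr0.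
have gba0 : g b - g a != 0 by rewrite gba expf_neq0 // subr_eq0 eq_sym.
have [d _ dfca] := MVT_between a c dfddf.
have -> : f b - f a - df a * (b - a) = h b - h a by rewrite /h; ring.
rewrite -[h b - h a](divfK gba0) E dfca gba normrM.
rewrite [`|(b - a) ^+ 2|]ger0_norm ?sqr_ge0 //.
apply: ler_wpM2r; first exact: sqr_ge0.
have -> : ddf d * (c - a) / (2 * (c - a)) = 2^-1 * ddf d.
  by field; rewrite -normr_gt0.
by rewrite normrM ger0_norm ?invr_ge0 ?ler0n // ler_wpM2l ?invr_ge0 ?ler0n.
Qed.

Lemma is_derive_lincomb {n} (c : 'I_n -> R) (h : 'I_n -> R -> R) (dh : 'I_n -> R)
    (t : R) :
  (forall i, is_derive t 1 (h i) (dh i)) ->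
  is_derive t 1 (fun s => \sum_(i < n) c i * h i s) (\sum_(i < n) c i * dh i).
Proof.
move=> hdh; have -> : (fun s => \sum_(i < n) c i * h i s) = \sum_(i < n) (c i \*: h i).
  by apply/funext => s; rewrite fct_sumE.
by apply: is_derive_sum => i; exact: is_deriveZ.
Qed.

End RealFunctions.

Section Directional.
Context {R : realType} {V : normedModType R}.

Lemma is_derive_line (f : V -> R) (q e : V) (c : R) :
  derivable f (q + c *: e) e ->
  is_derive c 1 (fun s => f (q + s *: e)) ('D_e f (q + c *: e)).
Proof.
move=> df.
have quotientE :
    (fun h : R => h^-1 *: (((fun s => f (q + s *: e)) \o shift c) (h *: 1) - f (q + c *: e)))
  = (fun h : R => h^-1 *: ((f \o shift (q + c *: e)) (h *: e) - f (q + c *: e))).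
  by apply/funext => h; rewrite /= [h *: 1]mulr1 scalerDl addrCA.
by apply: DeriveDef; rewrite /derivable /derive quotientE.
Qed.

End Directional.

Section PartialDerivatives.
Context {R : realType} {n : nat}.

Definition row_prefix (k : nat) (d : 'rV[R]_n) : 'rV[R]_n :=
  \row_i (if (i < k)%N then d 0 i else 0).

Lemma row_prefix0 d : row_prefix 0 d = 0.
Proof. by apply/rowP => i; rewrite !mxE. Qed.

Lemma row_prefix_full d : row_prefix n d = d.
Proof. by apply/rowP => i; rewrite mxE ltn_ord. Qed.

Lemma row_prefixS (j : 'I_n) d :
  row_prefix j.+1 d = row_prefix j d + d 0 j *: 'e_j.
Proof.
apply/rowP => i; rewrite !mxE eqxx /= ltnS.
case: ltngtP => [ij|ji|/val_inj ->]; last by rewrite eqxx mulr1 add0r.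
  by rewrite -val_eqE /= ltn_eqF // mulr0 addr0.
by rewrite -val_eqE /= gtn_eqF // mulr0 addr0.
Qed.

Lemma ball_row (p q : 'rV[R]_n) r :
  0 < r -> (forall i, `|q 0 i - p 0 i| < r) -> ball p r q.
Proof. by move=> r0 pq; split=> // i j; rewrite ord1 /ball /= distrC. Qed.

Variable f : 'rV[R]_n -> R.
Hypothesis f_partial : forall i q, derivable f q 'e_i.
Local Notation D i := ('D_('e_i) f).

Lemma partial_MVT (q : 'rV[R]_n) (j : 'I_n) (s : R) :
  exists2 c, `|c| <= `|s| & f (q + s *: 'e_j) - f q = s * D j (q + c *: 'e_j).
Proof.
have [c] := MVT_between 0 s (fun c => is_derive_line f q 'e_j c (f_partial _ _)).
by rewrite scale0r addr0 !subr0 mulrC; exists c.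
Qed.

(* Walk from p to p + t d through the points p + t (row_prefix k d): each step moves a
   single coordinate, so it is a mean value step for one partial derivative, evaluated
   inside the box on which the hypothesis controls it. *)
Lemma partials_increment (p d : 'rV[R]_n) (t eps : R) :
  (forall q : 'rV[R]_n, (forall i, `|q 0 i - p 0 i| <= `|t * d 0 i|) ->
     forall i, `|D i q - D i p| <= eps) ->
  `|f (p + t *: d) - f p - t * \sum_i d 0 i * D i p| <= `|t| * eps * \sum_i `|d 0 i|.
Proof.
move=> Dclose.
suff prefix k : (k <= n)%N ->
    `|f (p + t *: row_prefix k d) - f p - t * \sum_(i : 'I_n | (i < k)%N) d 0 i * D i p|
      <= `|t| * eps * \sum_(i : 'I_n | (i < k)%N) `|d 0 i|.
  have all_lt (F : 'I_n -> R) : \sum_(i : 'I_n | (i < n)%N) F i = \sum_i F i.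
    by apply: eq_bigl => i; rewrite ltn_ord.
  by have := prefix n (leqnn n); rewrite row_prefix_full !all_lt.
elim: k => [|k IH] kn.
  by rewrite row_prefix0 scaler0 addr0 !big_pred0 // mulr0 !subrr normr0 mulr0.
pose j := Ordinal kn.
have sumS (F : 'I_n -> R) :
    \sum_(i : 'I_n | (i < k.+1)%N) F i = \sum_(i : 'I_n | (i < k)%N) F i + F j.
  rewrite (bigD1 j) //= addrC; congr (_ + _); apply: eq_bigl => i.
  by rewrite ltnS ltn_neqAle -val_eqE andbC.
rewrite (row_prefixS j) !sumS.
set q := p + t *: row_prefix k d.
have -> : p + t *: (row_prefix k d + d 0 j *: 'e_j) = q + (t * d 0 j) *: 'e_j.
  by rewrite /q scalerDr addrA scalerA.
have [c c_le /(canRL (subrK _)) ->] := partial_MVT q j (t * d 0 j).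
have Dj : `|D j (q + c *: 'e_j) - D j p| <= eps.
  apply: Dclose => i; rewrite !mxE eqxx /= [_ - p 0 i]addrC !addrA addNr add0r.
  case: ltngtP => [ik|ki|ik].
  - by rewrite -val_eqE /= ltn_eqF // mulr0 addr0.
  - by rewrite -val_eqE /= gtn_eqF // !mulr0 addr0 normr0.
  - by rewrite (@val_inj _ _ _ i j ik) eqxx mulr0 add0r mulr1.
rewrite mulrDr.
have -> : t * d 0 j * D j (q + c *: 'e_j) + f q - f p
    - (t * \sum_(i : 'I_n | (i < k)%N) d 0 i * D i p + t * (d 0 j * D j p))
  = t * d 0 j * (D j (q + c *: 'e_j) - D j p)
    + (f q - f p - t * \sum_(i : 'I_n | (i < k)%N) d 0 i * D i p) by ring.
apply: le_trans (ler_normD _ _) _.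
rewrite [leRHS]mulrDr addrC; apply: lerD; first exact: IH (ltnW kn).
by rewrite normrM -mulrA [eps * _]mulrC mulrA normrM ler_wpM2l.
Qed.

Lemma is_derive_partials (p d : 'rV[R]_n) :
  (forall i, {for p, continuous (D i)}) -> is_derive p d f (\sum_i d 0 i * D i p).
Proof.
move=> Dcont; set Df := \sum_i _.
suff quotient_cvg : (fun h : R => h^-1 *: ((f \o shift p) (h *: d) - f p)) @ 0^' --> Df.
  by apply: DeriveDef; [exact: cvgP quotient_cvg | exact: cvg_lim quotient_cvg].
apply/cvgrPdist_le => eps eps0.
set A := \sum_i `|d 0 i|.
have A0 : 0 <= A by apply: sumr_ge0.
have A1 : 0 < A + 1 by rewrite ltr_wpDl.
pose eps' := eps / (A + 1).
have eps'0 : 0 < eps' by rewrite divr_gt0.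
have /nbhs_ballP[r /= r0 Dclose] :
    \forall q \near p, forall i, `|D i q - D i p| <= eps'.
  apply: (@filter_forall _ 'I_n (fun i q => `|D i q - D i p| <= eps') (nbhs p) _) => i.
  exact: cvgr_distC_le (Dcont i) _ eps'0.
near=> t.
have t0 : t != 0 by near: t; exact: nbhs_dnbhs_neq.
have tA : `|t| * (A + 1) < r.
  by rewrite -ltr_pdivlMr //; near: t; apply: dnbhs0_lt; rewrite divr_gt0.
have box_ball (q : 'rV[R]_n) :
    (forall i, `|q 0 i - p 0 i| <= `|t * d 0 i|) -> ball p r q.
  move=> qbox; apply: ball_row => // i.
  apply: le_lt_trans (qbox i) (le_lt_trans _ tA).
  rewrite normrM ler_wpM2l // (@le_trans _ _ A) //; last by rewrite lerDl.
  by rewrite /A (bigD1 i) //= lerDl sumr_ge0.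
have := partials_increment p d t eps' (fun q qbox => Dclose q (box_ball q qbox)).
rewrite /= [t *: d + p]addrC.
have -> : Df - t^-1 *: (f (p + t *: d) - f p)
    = - t^-1 * (f (p + t *: d) - f p - t * Df).
  by rewrite -[t^-1 *: _]/(t^-1 * _); field.
rewrite normrM normrN normfV ler_pdivrMl ?normr_gt0 // => incr.
apply: le_trans incr _; rewrite -mulrA ler_wpM2l //.
by rewrite /eps' mulrAC ler_pdivrMr // ler_wpM2l ?(ltW eps0) // lerDl.
Unshelve. all: by end_near.
Qed.

Lemma is_derive_ray (r : 'rV[R]_n) (t : R) : (forall i, continuous (D i)) ->
  is_derive t 1 (fun s => f (s *: r)) (\sum_i r 0 i * D i (t *: r)).
Proof.
move=> Dcont; have [fd <-] := is_derive_partials (t *: r) r (fun i => Dcont i _).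
have -> : (fun s => f (s *: r)) = (fun s => f (0 + s *: r)).
  by apply/funext => s; rewrite add0r.
by rewrite -[in 'D_r f _](add0r (t *: r)); apply: is_derive_line; rewrite add0r.
Qed.

End PartialDerivatives.

Section SiteEnergy.
Context {R : realType}.
Implicit Types V : 'rV[R]_4 -> R.

Definition rho_row : 'rV[R]_4 := \row_i rho R i.

Lemma W_ray V : W V = fun s => V (s *: rho_row).
Proof. by apply/funext => s; rewrite /W; congr V; apply/rowP => i; rewrite !mxE. Qed.

Definition W' V (s : R) := \sum_i rho R i * pd i V (s *: rho_row).
Definition W'' V (s : R) := \sum_i rho R i * \sum_j rho R j * pd j (pd i V) (s *: rho_row).
Definition W''' V (s : R) :=
  \sum_i rho R i * \sum_j rho R j * \sum_k rho R k * pd k (pd j (pd i V)) (s *: rho_row).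

Lemma is_derive_rho_ray (g : 'rV[R]_4 -> R) (t : R) :
  (forall i q, derivable g q (evec R i)) -> (forall i, continuous (pd i g)) ->
  is_derive t 1 (fun s => g (s *: rho_row)) (\sum_i rho R i * pd i g (t *: rho_row)).
Proof.
move=> gd gc; apply: is_derive_eq (is_derive_ray _ gd rho_row t gc) _.
by apply: eq_bigr => i _; rewrite mxE.
Qed.

Lemma is_derive_W V (t : R) : C3 V -> is_derive t 1 (W V) (W' V t).
Proof. by case=> _ [Vd [Vc _]]; rewrite W_ray; exact: is_derive_rho_ray. Qed.

Lemma is_derive_W' V (t : R) : C3 V -> is_derive t 1 (W' V) (W'' V t).
Proof.
case=> _ [_ [_ [Vd [Vc _]]]].
apply: (is_derive_lincomb (rho R) (fun i s => pd i V (s *: rho_row))) => i.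
exact: is_derive_rho_ray.
Qed.

Lemma is_derive_W'' V (t : R) : C3 V -> is_derive t 1 (W'' V) (W''' V t).
Proof.
case=> _ [_ [_ [_ [_ [Vd Vc]]]]].
apply: (is_derive_lincomb (rho R)
  (fun i s => \sum_j rho R j * pd j (pd i V) (s *: rho_row))) => i.
apply: (is_derive_lincomb (rho R) (fun j s => pd j (pd i V) (s *: rho_row))) => j.
exact: is_derive_rho_ray.
Qed.

Lemma sum_rev3 (I J K : finType) (G : I -> J -> K -> R) :
  \sum_i \sum_j \sum_k G i j k = \sum_k \sum_j \sum_i G i j k.
Proof.
rewrite exchange_big /= (eq_bigr (fun j => \sum_k \sum_i G i j k)); last first.
  by move=> j _; rewrite exchange_big.
by rewrite exchange_big.
Qed.

Lemma normr_W'''_le V s : bounded_third V -> `|W''' V s| <= M30 V.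
Proof.
case=> M VM; rewrite /M30 sum_rev3 /W'''.
apply: (le_trans (ler_norm_sum _ _ _)); apply: ler_sum => i _.
rewrite mulr_sumr; apply: (le_trans (ler_norm_sum _ _ _)); apply: ler_sum => j _.
rewrite mulr_sumr mulr_sumr; apply: (le_trans (ler_norm_sum _ _ _)); apply: ler_sum => k _.
rewrite /m3 !mulrA [rho R k * _ * _]mulrC [rho R k * _]mulrC mulrA normrM ler_wpM2l //.
apply: ub_le_sup; last by exists (s *: rho_row).
by exists M => _ [g _ <-]; exact: VM.
Qed.

Lemma derive1_W V : C3 V -> derive1 (W V) = W' V.
Proof.
by move=> VC3; apply/funext => t; rewrite derive1E; case: (is_derive_W V t VC3).
Qed.

Lemma derive1_WL V F x : C3 V -> derive1 (WL V F) x = W' V F + W'' V F * (x - F).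
Proof.
move=> VC3.
set c1 := derive1 (W V) F; set c2 := derive1 (derive1 (W V)) F.
have dWL : is_derive x 1 (WL V F) (c1 + c2 * (x - F)).
  apply: is_derive_eq (is_deriveD (is_deriveD (is_derive_cst (W V F) x 1)
    (is_deriveZ c1 (is_derive_shift x 1 (- F))))
    (is_deriveZ (2^-1 * c2) (is_deriveX 2 (is_derive_shift x 1 (- F))))) _.
  by rewrite expr1 /GRing.scale /=; field.
rewrite derive1E (derive_val (is_derive := dWL)) /c1 /c2 derive1_W // derive1E.
by case: (is_derive_W' V F VC3) => _ ->.
Qed.

Lemma derive1_WL_sub_W_le V F G : C3 V -> bounded_third V ->
  `|derive1 (WL V F) G - derive1 (W V) G| <= 2^-1 * M30 V * (G - F) ^+ 2.
Proof.
move=> VC3 Vb; rewrite derive1_WL // derive1_W // -normrN.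
have -> : - (W' V F + W'' V F * (G - F) - W' V G) = W' V G - W' V F - W'' V F * (G - F).
  by ring.
apply: taylor2_bound => t.
- exact: is_derive_W'.
- exact: is_derive_W''.
- exact: normr_W'''_le.
Qed.

End SiteEnergy.

Section CauchySchwarz.
Context {R : rcfType} {I : finType}.
Implicit Types a b : I -> R.

Lemma sum_mul_sqr_le a b :
  (\sum_i a i * b i) ^+ 2 <= (\sum_i a i ^+ 2) * (\sum_i b i ^+ 2).
Proof.
have : 0 <= \sum_i \sum_j (a i * b j - a j * b i) ^+ 2.
  by apply: sumr_ge0 => i _; apply: sumr_ge0 => j _; exact: sqr_ge0.
have -> : \sum_i \sum_j (a i * b j - a j * b i) ^+ 2 =
    \sum_i \sum_j a i ^+ 2 * b j ^+ 2 + \sum_i \sum_j a j ^+ 2 * b i ^+ 2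
    - 2 * \sum_i \sum_j (a i * b i) * (a j * b j).
  rewrite mulr_sumr -big_split -sumrB /=; apply: eq_bigr => i _.
  by rewrite mulr_sumr -big_split -sumrB /=; apply: eq_bigr => j _; ring.
rewrite [X in _ + X - _]exchange_big -!big_distrlr /=.
by nra.
Qed.

Lemma sum_mul_le_sqrt a b :
  \sum_i a i * b i <= Num.sqrt (\sum_i a i ^+ 2) * Num.sqrt (\sum_i b i ^+ 2).
Proof.
have sqr_sum_ge0 c : 0 <= \sum_i c i ^+ 2 :> R.
  by apply: sumr_ge0 => i _; exact: sqr_ge0.
rewrite -sqrtrM //; apply: le_trans (ler_norm _) _.
by rewrite -sqrtr_sqr ler_sqrt ?mulr_ge0 // sum_mul_sqr_le.
Qed.

End CauchySchwarz.

Lemma Lp_Omega_l_double_exp {R : realType} k L N (f : int -> R) : (0 < k)%N ->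
  Lp_Omega_l (k.*2)%:R L N f ^+ k
  = Num.sqrt (cell_integral N
      (fun xi => (if in_Omega_l L N xi then `|f xi| ^+ k else 0) ^+ 2)).
Proof.
move=> k0; rewrite /Lp_Omega_l.
set S := cell_integral N _.
have S0 : 0 <= S by apply: sumr_ge0 => i _; case: ifP => _ //; exact: powR_ge0.
rewrite -powR_mulrn ?powR_ge0 // -powRrM.
have -> : (k.*2)%:R^-1 * k%:R = 2^-1 :> R.
  by rewrite -muln2 natrM invfM mulrAC mulVf ?mul1r // pnatr_eq0 -lt0n.
rewrite powR12_sqrt //; congr Num.sqrt; apply: eq_bigr => i _; case: ifP => _.
  by rewrite powR_mulrn ?normr_ge0 // -exprM muln2.
by rewrite expr0n.
Qed.

Theorem theorem3p4 (R : realType) (V : 'rV[R]_4 -> R) (F : R) (L : int) (N : nat)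
  (u v : int -> R) :
  C3 V -> bounded_third V -> 0 < F -> L < N%:Z ->
  (forall xi : int, N%:Z <= `|xi| -> u xi = 0) ->
  in_YN F N v ->
  let y := fun xi : int => F * xi%:~R + u xi in
  cell_integral N (fun xi => Tqnll V F L N y xi * nabla v xi)
    <= 2^-1 * M30 V * (Lp_Omega_l 4 L N (nabla u)) ^+ 2 * Lp_Omega_l 2 L N (nabla v).
Proof.
move=> VC3 Vb _ _ _ _ /=; set y := fun xi : int => F * xi%:~R + u xi.
pose restrict (g : int -> R) xi := if in_Omega_l L N xi then g xi else 0.
have M0 : 0 <= M30 V := le_trans (normr_ge0 _) (normr_W'''_le V 0 Vb).
have cellwise xi : Tqnll V F L N y xi * nabla v xi <= 2^-1 * M30 V *
    (restrict (fun xi => `|nabla u xi| ^+ 2) xi * restrict (fun xi => `|nabla v xi| ^+ 1) xi).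
  rewrite /Tqnll /restrict; case: ifP => _; last by rewrite !mul0r mulr0.
  have -> : nabla u xi = nabla y xi - F by rewrite /nabla /y intrD; ring.
  apply: le_trans (ler_norm _) _; rewrite normrM mulrA real_normK ?num_real // ler_wpM2r //.
  exact: derive1_WL_sub_W_le.
apply: le_trans (ler_sum _ (fun i _ => cellwise _)) _.
rewrite -mulr_sumr -mulrA ler_wpM2l ?mulr_ge0 ?invr_ge0 ?ler0n //.
rewrite (Lp_Omega_l_double_exp 2) // -[Lp_Omega_l 2 _ _ _]expr1 (Lp_Omega_l_double_exp 1) //.
exact: sum_mul_le_sqrt.
Qed.
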